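(* Let $\mathbb{F}$ be a field and $n,p,r$ integers with $0<r\le\min(n,p)$, and assume $|\mathbb{F}|>r+1$. Let $J_r := \begin{bmatrix} I_r & 0 \\ 0 & 0 \end{bmatrix}\in M_{n,p}(\mathbb{F})$ and $M = \begin{bmatrix} A & C \\ B & D \end{bmatrix}\in M_{n,p}(\mathbb{F})$ with $A\in M_r(\mathbb{F})$, $C\in M_{r,p-r}(\mathbb{F})$, $B\in M_{n-r,r}(\mathbb{F})$, $D\in M_{n-r,p-r}(\mathbb{F})$. If $\operatorname{rk}(J_r+tM)\le r$ for all $t\in\mathbb{F}$, then $D=0$ and $BA^kC=0$ for every integer $k\ge 0$. *)

From mathcomp Require Import all_boot all_algebra.
Set Implicit Arguments. Unset Strict Implicit. Unset Printing Implicit Defensive.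
Import GRing.Theory.
Local Open Scope ring_scope.

Definition Jr (F : fieldType) (r n' p' : nat) : 'M[F]_(r + n', r + p') :=
  block_mx (1%:M : 'M[F]_r) 0 0 0.

(* |F| > m, stated so that infinite fields are allowed: F has more than
   m pairwise distinct elements. *)
Definition card_gt (F : fieldType) (m : nat) : Prop :=
  exists s : seq F, uniq s /\ (m < size s)%N.

From mathcomp Require Import all_boot all_algebra.

Set Implicit Arguments.
Unset Strict Implicit.
Unset Printing Implicit Defensive.

Import GRing.Theory.
Local Open Scope ring_scope.

(* Bordering the leading r x r block with row i and column j of the lower
   blocks gives an (r+1)-minor of J_r + tM, which vanishes for every t since
   the rank is at most r.  It has degree at most r+1 in t and F has more than
   r+1 elements, so it also vanishes as a polynomial in X.  With P = I + XA
   and b, c, d the bordering entries, this minor is det P times the Schur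
   complement X (d - X b P^-1 c) = X (d - sum_k (-1)^k X^(k+1) b A^k c), and
   det P is a unit of F[[X]]; hence d = 0 and b A^k c = 0 for all k.  Writing
   P^-1 = adj P / det P avoids power series: the coefficients are peeled off
   one at a time using det P(0) = 1. *)

Definition pencil (R : nzRingType) m n (J M : 'M[R]_(m, n)) : 'M[{poly R}]_(m, n) :=
  map_mx polyC J + 'X *: map_mx polyC M.

Lemma pencil_block (R : nzRingType) m1 m2 n1 n2
    (J1 M1 : 'M[R]_(m1, n1)) (J2 M2 : 'M[R]_(m1, n2))
    (J3 M3 : 'M[R]_(m2, n1)) (J4 M4 : 'M[R]_(m2, n2)) :
  pencil (block_mx J1 J2 J3 J4) (block_mx M1 M2 M3 M4) =
  block_mx (pencil J1 M1) (pencil J2 M2) (pencil J3 M3) (pencil J4 M4).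
Proof. by rewrite /pencil !map_block_mx scale_block_mx add_block_mx. Qed.

Lemma pencil0 (R : nzRingType) m n (M : 'M[R]_(m, n)) :
  pencil 0 M = 'X *: map_mx polyC M.
Proof. by rewrite /pencil map_mx0 add0r. Qed.

Lemma horner_det_pencil (R : comNzRingType) n (J M : 'M[R]_n) (t : R) :
  (\det (pencil J M)).[t] = \det (J + t *: M).
Proof.
rewrite -horner_evalE -det_map_mx; congr (\det _); apply/matrixP => i j.
by rewrite !mxE [LHS]horner_evalE !hornerE mulrC.
Qed.

Lemma size_det_leq (R : comNzRingType) n d (M : 'M[{poly R}]_n) :
  (forall i j, size (M i j) <= d.+1)%N -> (size (\det M) <= (n * d).+1)%N.
Proof.
move=> szM; rewrite /determinant.
apply: (big_ind (fun p : {poly R} => size p <= (n * d).+1)%N) => /=.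
- by rewrite size_poly0.
- by move=> p q szp szq; rewrite (leq_trans (size_polyD _ _)) // geq_max szp.
move=> s _; rewrite size_Msign (leq_trans (size_poly_prod_leq _ _)) //.
rewrite cardT size_enum_ord leq_subLR addnS ltnS -mulnS.
apply: (@leq_trans (\sum_(i < n) d.+1)); first exact: leq_sum.
by rewrite sum_nat_const card_ord.
Qed.

Lemma size_det_pencil (R : comNzRingType) n (J M : 'M[R]_n) :
  (size (\det (pencil J M)) <= n.+1)%N.
Proof.
rewrite -[n in n.+1]muln1; apply: size_det_leq => i j; rewrite !mxE.
rewrite (leq_trans (size_polyD _ _)) // geq_max (leq_trans (size_polyC_leq1 _)) //=.
by rewrite (leq_trans (size_polyMleq _ _)) // size_polyX size_polyC; case: (_ != 0).
Qed.

Lemma det_pencil_eq0 (F : fieldType) n (J M : 'M[F]_n) :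
  card_gt F n -> (forall t, \det (J + t *: M) = 0) -> \det (pencil J M) = 0.
Proof.
move=> [s [uniq_s size_s]] singular; apply/eqP; apply: contraTT size_s => nz_det.
have roots_s : all (root (\det (pencil J M))) s.
  by apply/allP => t _; rewrite /root horner_det_pencil singular.
rewrite -ltnS -leqNgt.
by rewrite (leq_trans (max_poly_roots nz_det roots_s uniq_s)) ?size_det_pencil.
Qed.

Lemma det_schur_eq0 (R : idomainType) m n (P : 'M[R]_m) (U : 'M[R]_(m, n))
    (V : 'M[R]_(n, m)) (W : 'M[R]_n) :
  \det P != 0 -> \det (block_mx P U V W) = 0 ->
  \det (\det P *: W - V *m \adj P *m U) = 0.
Proof.
move=> nzP singular.
pose L := block_mx (\adj P) 0 (- V *m \adj P) ((\det P)%:M : 'M[R]_n).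
have LS : L *m block_mx P U V W =
    block_mx (\det P)%:M (\adj P *m U) 0 (\det P *: W - V *m \adj P *m U).
  rewrite mulmx_block !mul0mx !addr0 mul_adj_mx mul_scalar_mx; congr block_mx.
  - by rewrite !mulNmx -mulmxA mul_adj_mx mul_mx_scalar addNr.
  - by rewrite mul_scalar_mx !mulNmx addrC.
have := congr1 determinant LS.
rewrite det_mulmx singular mulr0 det_ublock det_scalar => /esym/eqP.
by rewrite mulf_eq0 expf_eq0 (negPf nzP) andbF => /eqP.
Qed.

Lemma adj_pencil_mulmx_exp (R : comNzRingType) n (x : R) (N : 'M[R]_n) k :
  \det (1%:M + x *: N) *: N ^+ k =
  \adj (1%:M + x *: N) *m N ^+ k + x *: (\adj (1%:M + x *: N) *m N ^+ k.+1).
Proof.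
rewrite -mul_scalar_mx -mul_adj_mx -mulmxA scalemxAr -mulmxDr; congr (_ *m _).
by rewrite mulmxDl mul1mx -scalemxAl exprS.
Qed.

Lemma scale_polyX_mx_eq0 (R : idomainType) m n (M : 'M[{poly R}]_(m, n)) :
  'X *: M = 0 -> M = 0.
Proof.
move/matrixP => XM; apply/matrixP => i j; move/eqP: (XM i j).
by rewrite !mxE mulf_eq0 polyX_eq0 => /eqP.
Qed.

Lemma recurrence_eq0 (R : idomainType) m n (q : {poly R})
    (c : nat -> 'M[R]_(m, n)) (e : nat -> 'M[{poly R}]_(m, n)) :
  q.[0] = 1 -> e 0%N = 0 ->
  (forall k, q *: map_mx polyC (c k) = e k + 'X *: e k.+1) ->
  forall k, c k = 0.
Proof.
move=> q0 e0 rec.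
have step k : e k = 0 -> c k = 0 /\ e k.+1 = 0.
  move=> ek; have := rec k; rewrite ek add0r => eqk.
  have ck : c k = 0.
    apply/matrixP => i j; have := congr1 (fun M : 'M_(m, n) => (M i j).[0]) eqk.
    by rewrite !mxE /= !hornerE q0 mul1r.
  split=> //; apply: scale_polyX_mx_eq0.
  by rewrite -eqk ck map_mx0 scaler0.
have e_eq0 k : e k = 0 by elim: k => // k /step [].
by move=> k; case: (step k (e_eq0 k)).
Qed.

Lemma bordered_pencil_singular (F : fieldType) r (A : 'M[F]_r)
    (u : 'M[F]_(r, 1)) (v : 'M[F]_(1, r)) (w : 'M[F]_1) :
  card_gt F r.+1 ->
  (forall t, \det (block_mx 1%:M 0 0 0 + t *: block_mx A u v w) = 0) ->
  w = 0 /\ forall k, v *m A ^+ k *m u = 0.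
Proof.
rewrite -addn1 => cardF singular.
have := det_pencil_eq0 cardF singular.
rewrite pencil_block !pencil0 /pencil map_mx1 => /det_schur_eq0.
set P := 1%:M + _.
have q0 : (\det P).[0] = 1.
  by have := horner_det_pencil 1%:M A 0; rewrite /pencil map_mx1 scale0r addr0 det1.
have nz_q : \det P != 0.
  by apply: contra_eq_neq q0 => ->; rewrite horner0 eq_sym oner_neq0.
move=> /(_ nz_q) schur.
set v' := map_mx polyC v; set u' := map_mx polyC u; set A' := map_mx polyC A.
(* Shifting c and e by one makes the Schur identity the case k = 0. *)
pose c k := if k is k'.+1 then v *m A ^+ k' *m u else w.
pose e k := if k is k'.+1 then v' *m \adj P *m A' ^+ k' *m u' else 0.
have recur k : \det P *: map_mx polyC (c k) = e k + 'X *: e k.+1.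
  case: k => [|k] /=.
    apply/eqP; rewrite add0r expr0 mulmx1 -subr_eq0; apply/eqP/scale_polyX_mx_eq0.
    apply/matrixP => i j; rewrite !ord1 [RHS]mxE -{}schur det_mx11.
    apply: (congr1 (fun M : 'M_1 => M 0 0)).
    by rewrite -scalemxAr -!scalemxAl scalerBr !scalerA (mulrC 'X).
  rewrite map_mxM map_mxM rmorphXn [LHS]scalemxAl [in LHS]scalemxAr.
  rewrite (adj_pencil_mulmx_exp 'X A') mulmxDr mulmxDl -scalemxAr -scalemxAl.
  by rewrite !mulmxA.
have c_eq0 := recurrence_eq0 q0 (erefl 0) recur.
by split=> [|k]; [apply: (c_eq0 0%N) | apply: (c_eq0 k.+1)].
Qed.

Lemma det_mulmx_rank_lt (F : fieldType) m n k (L : 'M[F]_(k, m))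
    (X : 'M[F]_(m, n)) (R : 'M[F]_(n, k)) :
  (\rank X < k)%N -> \det (L *m X *m R) = 0.
Proof.
move=> rkX; apply/eqP; apply: contraTT rkX => nz_det.
have : row_free (L *m X *m R) by rewrite row_free_unit unitmxE unitfE.
rewrite /row_free => /eqP <-; rewrite -leqNgt.
by rewrite (leq_trans (mxrankM_maxl _ _)) // mxrankM_maxr.
Qed.

Lemma mulmx_block_diag1 (R : pzRingType) m1 m2 n1 n2 k l
    (L : 'M[R]_(k, m2)) (A : 'M[R]_(m1, n1)) (B : 'M[R]_(m1, n2))
    (C : 'M[R]_(m2, n1)) (D : 'M[R]_(m2, n2)) (K : 'M[R]_(n2, l)) :
  block_mx 1%:M 0 0 L *m block_mx A B C D *m block_mx 1%:M 0 0 K =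
  block_mx A (B *m K) (L *m C) (L *m D *m K).
Proof. by rewrite !mulmx_block !mul1mx !mulmx1 !mul0mx !mulmx0 !addr0 !add0r. Qed.

Lemma det_bordered_minor_eq0 (F : fieldType) r n' p' (A : 'M[F]_r)
    (C : 'M[F]_(r, p')) (B : 'M[F]_(n', r)) (D : 'M[F]_(n', p')) i j t :
  (\rank (Jr F r n' p' + t *: block_mx A C B D)%R <= r)%N ->
  \det (block_mx 1%:M 0 0 (0 : 'M_1) +
        t *: block_mx A (col j C) (row i B) (col j (row i D))) = 0.
Proof.
move=> rk.
pose L : 'M[F]_(r + 1, r + n') := block_mx 1%:M 0 0 (delta_mx 0 i).
pose K : 'M[F]_(r + p', r + 1) := block_mx 1%:M 0 0 (delta_mx j 0).
have rk1 : (\rank (Jr F r n' p' + t *: block_mx A C B D)%R < r + 1)%N.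
  by rewrite addn1 ltnS.
have := det_mulmx_rank_lt L K rk1.
rewrite /L /K /Jr mulmxDr mulmxDl -scalemxAr -scalemxAl !mulmx_block_diag1.
by rewrite mul0mx !mulmx0 mul0mx -!rowE -!colE.
Qed.

Theorem corollary8 (F : fieldType) (r n' p' : nat) (hr : (0 < r)%N)
  (hF : card_gt F r.+1)
  (A : 'M[F]_r) (C : 'M[F]_(r, p')) (B : 'M[F]_(n', r)) (D : 'M[F]_(n', p'))
  (hrk : forall t : F, (\rank (Jr F r n' p' + t *: block_mx A C B D)%R <= r)%N) :
  D = 0 /\ (forall k : nat, B *m (A ^+ k) *m C = 0).
Proof.
have minor i j := bordered_pencil_singular hF
  (fun t => det_bordered_minor_eq0 i j (hrk t)).
split=> [|k]; apply/matrixP => i j; have [w0 vu0] := minor i j.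
- by move/matrixP/(_ 0 0): w0; rewrite !mxE.
- move: (vu0 k); rewrite -!row_mul colE mulmxA -colE.
  by move/matrixP/(_ 0 0); rewrite !mxE.
Qed.
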